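(* Let $M=\langle n_1,n_2,n_3\rangle$ be a numerical monoid of embedding dimension three with minimal generators $n_1<n_2<n_3$. Then $L(x+n_1)=L(x)+1$ for all $x\in M$, or $\ell(x+n_3)=\ell(x)+1$ for all $x\in M$.
   Context: $\mathbb{N}$ denotes the nonnegative integers. A numerical monoid is a submonoid of $\mathbb{N}$ with finite complement. For $x\in M$, $\mathsf{Z}(x)=\{(a_1,a_2,a_3)\in\mathbb{N}^3\mid a_1n_1+a_2n_2+a_3n_3=x\}$; $L(x)$ and $\ell(x)$ are the maximum and minimum of $a_1+a_2+a_3$ over $(a_1,a_2,a_3)\in\mathsf{Z}(x)$. *)

From mathcomp Require Import all_boot.
Set Implicit Arguments. Unset Strict Implicit. Unset Printing Implicit Defensive.

Definition inM3 (n1 n2 n3 x : nat) : Prop :=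
  exists a1 a2 a3, a1 * n1 + a2 * n2 + a3 * n3 = x.

Definition inM2 (a b x : nat) : Prop := exists c d, c * a + d * b = x.

Definition numerical3 (n1 n2 n3 : nat) : Prop :=
  exists F, forall x, F <= x -> inM3 n1 n2 n3 x.

Definition minimal_gens3 (n1 n2 n3 : nat) : Prop :=
  ~ inM2 n2 n3 n1 /\ ~ inM2 n1 n3 n2 /\ ~ inM2 n1 n2 n3.

Definition is_fact (n1 n2 n3 x a1 a2 a3 : nat) : bool :=
  a1 * n1 + a2 * n2 + a3 * n3 == x.

(* L(x): maximum of a1+a2+a3 over Z(x).  For positive generators every
   factorization has a_i <= x, so the search over a_i < x+1 is exhaustive. *)
Definition Lmax (n1 n2 n3 x : nat) : nat :=
  \max_(a1 < x.+1) \max_(a2 < x.+1) \max_(a3 < x.+1)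
     (if is_fact n1 n2 n3 x a1 a2 a3 then a1 + a2 + a3 else 0).

(* l(x): minimum of a1+a2+a3 over Z(x) (default x.+1 if Z(x) is empty,
   which never happens for x in M). *)
Definition lmin (n1 n2 n3 x : nat) : nat :=
  \big[minn/x.+1]_(a1 < x.+1) \big[minn/x.+1]_(a2 < x.+1)
     \big[minn/x.+1]_(a3 < x.+1)
     (if is_fact n1 n2 n3 x a1 a2 a3 then a1 + a2 + a3 else x.+1).

From mathcomp Require Import all_boot.
From mathcomp Require Import zify.
From Stdlib Require Import Classical.
Set Implicit Arguments. Unset Strict Implicit.

(* Suppose L(x + n1) > L(x) + 1 and l(y + n3) < l(y) + 1.  A longest
   factorization (0, b, c) of x + n1 then avoids n1, and comparing it with a
   longest factorization of x plus one n1 gives a trade u n2 = a n1 + g n3 with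
   u <= b and a + g < u.  Dually, a shortest factorization (p, d, 0) of y + n3
   avoids n3 and yields a trade v n2 = a' n1 + g' n3 with v <= d and
   v < a' + g'.  If v <= b, applying the second trade to (0, b, c) lengthens it;
   otherwise u <= b < v <= d, and applying the first trade to (p, d, 0)
   shortens it. *)

Lemma bigmin_leq (I : eqType) (r : seq I) idx (F : I -> nat) i :
  i \in r -> \big[minn/idx]_(j <- r) F j <= F i.
Proof.
elim: r => // j r IHr; rewrite in_cons big_cons => /predU1P[->|/IHr].
  exact: geq_minl.
by apply: leq_trans; exact: geq_minr.
Qed.

Lemma leq_bigmin (I : finType) idx (F : I -> nat) k :
  k <= idx -> (forall i, k <= F i) -> k <= \big[minn/idx]_(j : I) F j.
Proof.
move=> le_k_idx le_kF; elim/big_ind: _ => // u v ku kv.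
by rewrite leq_min ku kv.
Qed.

Section Factorizations.

Variables n1 n2 n3 : nat.
Hypotheses (n1_gt0 : 0 < n1) (n1_lt_n2 : n1 < n2) (n2_lt_n3 : n2 < n3).

Local Notation L := (Lmax n1 n2 n3).
Local Notation l := (lmin n1 n2 n3).
Local Notation inM := (inM3 n1 n2 n3).

Lemma factorization_bound x a1 a2 a3 :
  a1 * n1 + a2 * n2 + a3 * n3 = x ->
  [/\ a1 < x.+1, a2 < x.+1, a3 < x.+1 & a1 + a2 + a3 <= x].
Proof. by move=> e; split; nia. Qed.

Lemma leq_Lmax x a1 a2 a3 :
  a1 * n1 + a2 * n2 + a3 * n3 = x -> a1 + a2 + a3 <= L x.
Proof.
move=> e; have [lt1 lt2 lt3 _] := factorization_bound e.
apply: leq_trans (leq_bigmax (Ordinal lt1)).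
apply: leq_trans (leq_bigmax (Ordinal lt2)).
apply: leq_trans (leq_bigmax (Ordinal lt3)).
by rewrite /= /is_fact e eqxx.
Qed.

Lemma Lmax_leq x k :
  (forall a1 a2 a3, a1 * n1 + a2 * n2 + a3 * n3 = x -> a1 + a2 + a3 <= k) ->
  L x <= k.
Proof.
move=> H; apply/bigmax_leqP => a1 _; apply/bigmax_leqP => a2 _.
apply/bigmax_leqP => a3 _; rewrite /is_fact; case: eqP => // e; exact: H.
Qed.

Lemma lmin_leq x a1 a2 a3 :
  a1 * n1 + a2 * n2 + a3 * n3 = x -> l x <= a1 + a2 + a3.
Proof.
move=> e; have [lt1 lt2 lt3 _] := factorization_bound e.
apply: leq_trans (bigmin_leq _ _ (mem_index_enum (Ordinal lt1))) _.
apply: leq_trans (bigmin_leq _ _ (mem_index_enum (Ordinal lt2))) _.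
apply: leq_trans (bigmin_leq _ _ (mem_index_enum (Ordinal lt3))) _.
by rewrite /= /is_fact e eqxx.
Qed.

Lemma leq_lmin x k : k <= x.+1 ->
  (forall a1 a2 a3, a1 * n1 + a2 * n2 + a3 * n3 = x -> k <= a1 + a2 + a3) ->
  k <= l x.
Proof.
move=> le_k H; apply: leq_bigmin => // a1; apply: leq_bigmin => // a2.
apply: leq_bigmin => // a3; rewrite /is_fact; case: eqP => // e; exact: H.
Qed.

Lemma Lmax_attained x : inM x ->
  exists a1 a2 a3, a1 * n1 + a2 * n2 + a3 * n3 = x /\ a1 + a2 + a3 = L x.
Proof.
move=> [b1 [b2 [b3 eb]]]; apply: NNPP => none.
have lt_L a1 a2 a3 : a1 * n1 + a2 * n2 + a3 * n3 = x -> a1 + a2 + a3 < L x.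
  move=> e; rewrite ltn_neqAle leq_Lmax // andbT.
  by apply/eqP => len; apply: none; exists a1, a2, a3.
have L_pos : 0 < L x by have := lt_L _ _ _ eb; lia.
have : L x <= (L x).-1.
  by apply: Lmax_leq => a1 a2 a3 e; have := lt_L _ _ _ e; lia.
lia.
Qed.

Lemma lmin_attained x : inM x ->
  exists a1 a2 a3, a1 * n1 + a2 * n2 + a3 * n3 = x /\ a1 + a2 + a3 = l x.
Proof.
move=> [b1 [b2 [b3 eb]]]; apply: NNPP => none.
have gt_l a1 a2 a3 : a1 * n1 + a2 * n2 + a3 * n3 = x -> l x < a1 + a2 + a3.
  move=> e; rewrite ltn_neqAle lmin_leq // andbT.
  by apply/eqP => len; apply: none; exists a1, a2, a3.
have : (l x).+1 <= l x.
  apply: leq_lmin => [|a1 a2 a3]; last exact: gt_l.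
  by have [_ _ _ le_b_x] := factorization_bound eb; have := lmin_leq eb; lia.
by rewrite ltnn.
Qed.

Lemma shortening_trade a B C b c : 0 < a ->
  a * n1 + B * n2 + C * n3 = b * n2 + c * n3 -> a + B + C < b + c ->
  exists u g, [/\ u <= b, u * n2 = a * n1 + g * n3 & a + g < u].
Proof.
move=> a_gt0 e len.
have c_lt_C : c < C.
  rewrite ltnNge; apply/negP => C_le_c.
  have [b_le_B|B_lt_b] := leqP b B; nia.
have B_lt_b : B < b by nia.
by exists (b - B), (C - c); split; nia.
Qed.

Lemma lengthening_trade p d E1 E2 g : 0 < g ->
  p * n1 + d * n2 = E1 * n1 + E2 * n2 + g * n3 -> p + d < E1 + E2 + g ->
  exists v a, [/\ v <= d, v * n2 = a * n1 + g * n3 & v < a + g].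
Proof.
move=> g_gt0 e len.
have p_lt_E1 : p < E1.
  rewrite ltnNge; apply/negP => E1_le_p.
  have [d_le_E2|E2_lt_d] := leqP d E2; nia.
have E2_lt_d : E2 < d by nia.
by exists (d - E2), (E1 - p); split; nia.
Qed.

Lemma trade_exchange x a1 a2 a3 u a g :
  a1 * n1 + a2 * n2 + a3 * n3 = x -> u <= a2 -> u * n2 = a * n1 + g * n3 ->
  (a1 + a) * n1 + (a2 - u) * n2 + (a3 + g) * n3 = x.
Proof. by move=> e u_le_a2 tr; nia. Qed.

Lemma Lmax_addn1_failure x : inM x -> L (x + n1) <> (L x).+1 ->
  exists b c u a g, [/\ b * n2 + c * n3 = x + n1, b + c = L (x + n1),
    u <= b, u * n2 = a * n1 + g * n3 & a + g < u].
Proof.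
move=> Mx L_neq; have [A [B [C [eA lenA]]]] := Lmax_attained Mx.
have eA' : A.+1 * n1 + B * n2 + C * n3 = x + n1 by rewrite -eA mulSn; lia.
have L_gt : (L x).+1 < L (x + n1) by have := leq_Lmax eA'; lia.
have [p [b [c [e len]]]] : exists p b c,
    p * n1 + b * n2 + c * n3 = x + n1 /\ p + b + c = L (x + n1).
  by apply: Lmax_attained; exists A.+1, B, C.
case: p e len => [|p] e len.
  have [u [g [u_le_b tr short]]] : exists u g,
      [/\ u <= b, u * n2 = A.+1 * n1 + g * n3 & A.+1 + g < u].
    by apply: (shortening_trade (B := B) (C := C) (c := c)); lia.
  by exists b, c, u, A.+1, g; split; lia.
have e' : p * n1 + b * n2 + c * n3 = x by move: e; rewrite mulSn; lia.
by have := leq_Lmax e'; lia.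
Qed.

Lemma lmin_addn3_failure y : inM y -> l (y + n3) <> (l y).+1 ->
  exists p d v a g, [/\ p * n1 + d * n2 = y + n3, p + d = l (y + n3),
    v <= d, v * n2 = a * n1 + g * n3 & v < a + g].
Proof.
move=> My l_neq; have [E1 [E2 [E3 [eE lenE]]]] := lmin_attained My.
have eE' : E1 * n1 + E2 * n2 + E3.+1 * n3 = y + n3 by rewrite -eE mulSn; lia.
have l_lt : l (y + n3) < (l y).+1 by have := lmin_leq eE'; lia.
have [p [d [r [e len]]]] : exists p d r,
    p * n1 + d * n2 + r * n3 = y + n3 /\ p + d + r = l (y + n3).
  by apply: lmin_attained; exists E1, E2, E3.+1.
case: r e len => [|r] e len.
  have [v [a [v_le_d tr long]]] : exists v a,
      [/\ v <= d, v * n2 = a * n1 + E3.+1 * n3 & v < a + E3.+1].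
    by apply: (lengthening_trade (p := p) (E1 := E1) (E2 := E2)); lia.
  by exists p, d, v, a, E3.+1; split; lia.
have e' : p * n1 + d * n2 + r * n3 = y by move: e; rewrite mulSn; lia.
by have := lmin_leq e'; lia.
Qed.

Lemma Lmax_lmin_failures_exclusive x y : inM x -> inM y ->
  L (x + n1) <> (L x).+1 -> l (y + n3) <> (l y).+1 -> False.
Proof.
move=> Mx My /(Lmax_addn1_failure Mx) [b [c [u [a [g [eY lenY u_le_b tu short]]]]]].
move=> /(lmin_addn3_failure My) [p [d [v [a' [g' [eW lenW v_le_d tv long]]]]]].
have [v_le_b|b_lt_v] := leqP v b.
  have eY' : (0 + a') * n1 + (b - v) * n2 + (c + g') * n3 = x + n1.
    by apply: trade_exchange; rewrite // mul0n add0n.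
  by have := leq_Lmax eY'; lia.
have eW' : (p + a) * n1 + (d - u) * n2 + (0 + g) * n3 = y + n3.
  by apply: trade_exchange; rewrite ?mul0n ?addn0 //; lia.
by have := lmin_leq eW'; lia.
Qed.

End Factorizations.

Theorem mainTheorem9 (n1 n2 n3 : nat) :
  n1 < n2 -> n2 < n3 ->
  numerical3 n1 n2 n3 ->
  minimal_gens3 n1 n2 n3 ->
  (forall x, inM3 n1 n2 n3 x -> Lmax n1 n2 n3 (x + n1) = (Lmax n1 n2 n3 x).+1)
  \/
  (forall x, inM3 n1 n2 n3 x -> lmin n1 n2 n3 (x + n3) = (lmin n1 n2 n3 x).+1).
Proof.
move=> n1_lt_n2 n2_lt_n3 _ [n1_notin _].
have n1_gt0 : 0 < n1.
  by case: n1 n1_notin {n1_lt_n2} => // n1_notin; case: n1_notin; exists 0, 0.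
have [[x [Mx L_neq]]|L_step] := classic (exists x, inM3 n1 n2 n3 x /\
  Lmax n1 n2 n3 (x + n1) <> (Lmax n1 n2 n3 x).+1).
  right=> y My.
  case: (eqVneq (lmin n1 n2 n3 (y + n3)) (lmin n1 n2 n3 y).+1) => // /eqP l_neq.
  by case: (Lmax_lmin_failures_exclusive n1_gt0 n1_lt_n2 n2_lt_n3 Mx My L_neq l_neq).
left=> x Mx.
case: (eqVneq (Lmax n1 n2 n3 (x + n1)) (Lmax n1 n2 n3 x).+1) => // /eqP L_neq.
by case: L_step; exists x.
Qed.
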